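(* Let $X$ be a nonempty set and $d$ a triangular symmetric on $X$ such that $(X,d)$ is 0-complete. Let $T:X\to X$ be $d$-asymptotic, i.e. $\lim_n d(T^nx,T^{n+1}x)=0$ for all $x\in X$. Let $G\in\{M_1,M_2,M_3\}$ and suppose $T$ is $(d,G;\varphi)$-contractive, i.e. $d(Tx,Ty)\le\varphi(G(x,y))$ for all $x,y\in X$, for some nearly right admissible normal function $\varphi:[0,\infty)\to[0,\infty)$. Then $T$ is a global Picard operator (modulo $d$).
   Context: A symmetric on $X$ is a map $d:X\times X\to[0,\infty)$ with $d(x,y)=d(y,x)$; it is triangular if $d(x,z)\le d(x,y)+d(y,z)$ for all $x,y,z$. A sequence $(x_n)$ $0d$-converges to $x$ if $d(x_n,x)\to0$; it is $0d$-convergent if such $x$ exists. It is $0d$-Cauchy if for every $\varepsilon>0$ there is $j$ with $d(x_m,x_n)<\varepsilon$ whenever $j\le m<n$. $(X,d)$ is 0-complete if every $0d$-Cauchy sequence is $0d$-convergent. A subset $Y\neq\emptyset$ is $d$-singleton if $d(y_1,y_2)=0$ for all $y_1,y_2\in Y$. A point $z$ is $d$-fixed if $d(z,Tz)=0$; $\mathrm{Fix}(T;d)$ is the set of such points. $x$ is a Picard point (modulo $(d,T)$) if $(T^nx)$ is $0d$-convergent and every point to which it $0d$-converges lies in $\mathrm{Fix}(T;d)$. $T$ is a Picard operator (modulo $d$) if every $x\in X$ is a Picard point, and a global Picard operator (modulo $d$) if moreover $\mathrm{Fix}(T;d)$ is $d$-singleton. Notation: $M_1(x,y)=d(x,y)$,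 $H(x,y)=\max\{d(x,Tx),d(y,Ty)\}$, $L(x,y)=\frac12[d(x,Ty)+d(Tx,y)]$, $M_2=\max\{M_1,H\}$, $M_3=\max\{M_1,H,L\}$. A function $\varphi:[0,\infty)\to[0,\infty)$ is normal if $\varphi(0)=0$ and $\varphi(t)<t$ for $t>0$. For $s>0$, $L_+\varphi(s)=\max\{\limsup_{t\to s+}\varphi(t),\varphi(s)\}$. A normal $\varphi$ is nearly right admissible if there is a countable $Q\subseteq(0,\infty)$ with $L_+\varphi(s)<s$ (equivalently $\limsup_{t\to s+}\varphi(t)<s$) for all $s\in(0,\infty)\setminus Q$. *)

From Stdlib Require Import Reals Lra.
Open Scope R_scope.

Section Defs.
Context {X : Type}.

Definition symmetric (d : X -> X -> R) : Prop :=
  (forall x y, 0 <= d x y) /\ (forall x y, d x y = d y x).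

Definition triangular (d : X -> X -> R) : Prop :=
  forall x y z, d x z <= d x y + d y z.

Definition zd_conv (d : X -> X -> R) (u : nat -> X) (x : X) : Prop :=
  Un_cv (fun n => d (u n) x) 0.

Definition zd_convergent (d : X -> X -> R) (u : nat -> X) : Prop :=
  exists x, zd_conv d u x.

Definition zd_cauchy (d : X -> X -> R) (u : nat -> X) : Prop :=
  forall eps, eps > 0 -> exists j : nat,
    forall m n : nat, (j <= m)%nat -> (m < n)%nat -> d (u m) (u n) < eps.

Definition zero_complete (d : X -> X -> R) : Prop :=
  forall u, zd_cauchy d u -> zd_convergent d u.

Definition d_singleton (d : X -> X -> R) (Y : X -> Prop) : Prop :=
  (exists y, Y y) /\ forall y1 y2, Y y1 -> Y y2 -> d y1 y2 = 0.

Definition Fix (d : X -> X -> R) (T : X -> X) (z : X) : Prop := d z (T z) = 0.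

Definition picard_point (d : X -> X -> R) (T : X -> X) (x : X) : Prop :=
  zd_convergent d (fun n => Nat.iter n T x) /\
  forall z, zd_conv d (fun n => Nat.iter n T x) z -> Fix d T z.

Definition picard_operator (d : X -> X -> R) (T : X -> X) : Prop :=
  forall x, picard_point d T x.

Definition global_picard_operator (d : X -> X -> R) (T : X -> X) : Prop :=
  picard_operator d T /\ d_singleton d (Fix d T).

Definition d_asymptotic (d : X -> X -> R) (T : X -> X) : Prop :=
  forall x, Un_cv (fun n => d (Nat.iter n T x) (Nat.iter (S n) T x)) 0.

Definition M1 (d : X -> X -> R) (T : X -> X) (x y : X) : R := d x y.
Definition Hf (d : X -> X -> R) (T : X -> X) (x y : X) : R :=
  Rmax (d x (T x)) (d y (T y)).
Definition Lf (d : X -> X -> R) (T : X -> X) (x y : X) : R :=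
  (d x (T y) + d (T x) y) / 2.
Definition M2 (d : X -> X -> R) (T : X -> X) (x y : X) : R :=
  Rmax (M1 d T x y) (Hf d T x y).
Definition M3 (d : X -> X -> R) (T : X -> X) (x y : X) : R :=
  Rmax (Rmax (M1 d T x y) (Hf d T x y)) (Lf d T x y).

Definition contractive (d : X -> X -> R) (T : X -> X)
  (G : X -> X -> R) (phi : R -> R) : Prop :=
  forall x y, d (T x) (T y) <= phi (G x y).
End Defs.

(* phi : [0,oo) -> [0,oo), represented as R -> R with the conditions on [0,oo) *)
Definition normal (phi : R -> R) : Prop :=
  (forall t, 0 <= t -> 0 <= phi t) /\ phi 0 = 0 /\
  (forall t, 0 < t -> phi t < t).

(* L_+ phi(s) < s, i.e. max(limsup_{t->s+} phi t, phi s) < s, written out: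
   phi s < s and there are r < s and delta > 0 with phi t <= r on (s, s+delta). *)
Definition Lplus_lt (phi : R -> R) (s : R) : Prop :=
  phi s < s /\
  exists r delta, r < s /\ delta > 0 /\
    forall t, s < t < s + delta -> phi t <= r.

Definition countable_set (Q : R -> Prop) : Prop :=
  exists f : R -> nat, forall a b, Q a -> Q b -> f a = f b -> a = b.

Definition nearly_right_admissible (phi : R -> R) : Prop :=
  normal phi /\
  exists Q : R -> Prop, (forall s, Q s -> 0 < s) /\ countable_set Q /\
    forall s, 0 < s -> ~ Q s -> Lplus_lt phi s.

From Stdlib Require Import Reals Lra Lia Classical ClassicalEpsilon.
Open Scope R_scope.

(* Each of M1, M2, M3 lies between d x y and max (H x y, d x y + (d x Tx + d y Ty) / 2).
   Uniqueness and the fixed-point property of limits then follow by comparing d z (T z)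
   with phi of it.  For the Cauchy property, suppose the orbit (x_n) is not Cauchy at
   scale eps.  Since the exceptional set Q is countable, some level e in [eps/3, 2eps/3]
   avoids Q, so phi <= r < e on a right neighbourhood [e, e + delta).  Once consecutive
   steps are below eta, the first index n after m with d(x_m, x_n) >= e gives a pair
   whose G-value is in [e, e + delta), whence
   d(x_m, x_n) <= d(x_m, T x_m) + phi (G x_m x_n) + d(T x_n, x_n) < 2 eta + r <= e. *)

Section Avoid_sequence.
Variables (u : nat -> R) (a b : R).
Hypothesis Hab : a < b.

(* Step [k] keeps the outer third of the current interval lying away from [u k]. *)
Fixpoint nest (n : nat) : R * R :=
  match n with
  | O => (a, b)
  | S k => let p := nest k in
     if Rlt_dec (u k) ((fst p + snd p) / 2)
     then (snd p - (snd p - fst p) / 3, snd p)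
     else (fst p, fst p + (snd p - fst p) / 3)
  end.

Lemma nest_lt n : fst (nest n) < snd (nest n).
Proof. induction n; simpl; [lra|]. destruct Rlt_dec; simpl; lra. Qed.

Lemma nest_step n :
  fst (nest n) <= fst (nest (S n)) /\ snd (nest (S n)) <= snd (nest n).
Proof. pose proof (nest_lt n); simpl; destruct Rlt_dec; simpl; lra. Qed.

Lemma nest_nested m n : (m <= n)%nat ->
  fst (nest m) <= fst (nest n) /\ snd (nest n) <= snd (nest m).
Proof.
  induction 1 as [|n _ IH]; [lra|].
  pose proof (nest_step n); lra.
Qed.

Lemma nest_fst_le_snd m n : fst (nest m) <= snd (nest n).
Proof.
  pose proof (nest_nested m (Nat.max m n) ltac:(lia)).
  pose proof (nest_nested n (Nat.max m n) ltac:(lia)).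
  pose proof (nest_lt (Nat.max m n)); lra.
Qed.

Lemma nest_avoid n y : fst (nest (S n)) <= y <= snd (nest (S n)) -> y <> u n.
Proof.
  pose proof (nest_lt n); simpl; destruct Rlt_dec; simpl; intros Hy ->; lra.
Qed.

Lemma exists_avoiding_seq : exists l, a <= l <= b /\ forall n, l <> u n.
Proof.
  set (E := fun x => exists n, x = fst (nest n)).
  assert (HE : bound E).
  { exists b; intros x [n ->]; exact (nest_fst_le_snd n 0). }
  destruct (completeness E HE (ex_intro _ a (ex_intro _ 0%nat eq_refl)))
    as [l [Hub Hlub]].
  assert (Hfst : forall n, fst (nest n) <= l) by (intro n; apply Hub; now exists n).
  assert (Hsnd : forall n, l <= snd (nest n)).
  { intro n; apply Hlub; intros x [m ->]; apply nest_fst_le_snd. }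
  exists l; split.
  - exact (conj (Hfst 0%nat) (Hsnd 0%nat)).
  - intro n; apply nest_avoid; auto.
Qed.

End Avoid_sequence.

Lemma countable_set_avoid (Q : R -> Prop) a b :
  countable_set Q -> a < b -> exists l, a <= l <= b /\ ~ Q l.
Proof.
  intros [f Hf] Hab.
  set (u := fun n => epsilon (inhabits 0) (fun q => Q q /\ f q = n)).
  destruct (exists_avoiding_seq u a b Hab) as [l [Hl Hneq]].
  exists l; split; [exact Hl|]; intro Ql.
  destruct (epsilon_spec (inhabits 0) (fun q => Q q /\ f q = f l)
              (ex_intro _ l (conj Ql eq_refl))) as [Qu Hfu].
  apply (Hneq (f l)); symmetry; exact (Hf _ _ Qu Ql Hfu).
Qed.

Lemma Un_cv_0_eventually_lt (u : nat -> R) e :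
  Un_cv u 0 -> e > 0 -> exists N, forall n, (n >= N)%nat -> u n < e.
Proof.
  intros Hu He; destruct (Hu e He) as [N HN]; exists N; intros n Hn.
  specialize (HN n Hn); unfold R_dist in HN; rewrite Rminus_0_r in HN.
  exact (Rle_lt_trans _ _ _ (Rle_abs _) HN).
Qed.

Lemma nat_crossing (P : nat -> Prop) m n :
  ~ P m -> P n -> (m <= n)%nat -> exists k, (m <= k < n)%nat /\ ~ P k /\ P (S k).
Proof.
  intros Hm Hn Hle; induction Hle as [|n Hle IH]; [contradiction|].
  destruct (classic (P n)) as [Pn|nPn].
  - destruct (IH Pn) as [k [Hk HPk]]; exists k; split; [lia | exact HPk].
  - exists n; split; [lia | auto].
Qed.

Lemma Lplus_lt_right_bound (phi : R -> R) e : Lplus_lt phi e ->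
  exists r delta, r < e /\ 0 < delta /\ forall t, e <= t < e + delta -> phi t <= r.
Proof.
  intros [He [r [delta [Hr [Hdelta Hphi]]]]].
  exists (Rmax r (phi e)), delta; repeat split; [now apply Rmax_lub_lt | exact Hdelta|].
  intros t [Het Ht]; destruct (Rle_lt_or_eq_dec _ _ Het) as [Hlt | <-].
  - eapply Rle_trans; [apply Hphi; lra | apply Rmax_l].
  - apply Rmax_r.
Qed.

Section Contraction.
Variables (X : Type) (d : X -> X -> R) (T : X -> X) (G : X -> X -> R) (phi : R -> R).
Hypotheses (Hsym : symmetric d) (Htri : triangular d)
  (HG : G = M1 d T \/ G = M2 d T \/ G = M3 d T)
  (Hnormal : normal phi) (Hcontr : contractive d T G phi).

Lemma d_le_G x y : d x y <= G x y.
Proof.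
  unfold M3, M2, M1 in HG.
  destruct HG as [-> | [-> | ->]]; [lra | apply Rmax_l |].
  eapply Rle_trans; apply Rmax_l.
Qed.

Lemma G_le x y : G x y <= Rmax (Hf d T x y) (d x y + (d x (T x) + d y (T y)) / 2).
Proof.
  destruct Hsym as [Hnn Hs].
  assert (Hd : d x y <= d x y + (d x (T x) + d y (T y)) / 2)
    by (pose proof (Hnn x (T x)); pose proof (Hnn y (T y)); lra).
  assert (HL : Lf d T x y <= d x y + (d x (T x) + d y (T y)) / 2).
  { unfold Lf; pose proof (Htri x y (T y)); pose proof (Htri (T x) x y).
    rewrite (Hs (T x) x) in *; lra. }
  unfold M3, M2, M1 in HG.
  destruct HG as [-> | [-> | ->]].
  - eapply Rle_trans; [exact Hd | apply Rmax_r].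
  - apply Rmax_lub; [eapply Rle_trans; [exact Hd | apply Rmax_r] | apply Rmax_l].
  - apply Rmax_lub; [apply Rmax_lub|].
    + eapply Rle_trans; [exact Hd | apply Rmax_r].
    + apply Rmax_l.
    + eapply Rle_trans; [exact HL | apply Rmax_r].
Qed.

Lemma G_eq_d_or_Hf_le_G x y : G x y = d x y \/ Hf d T x y <= G x y.
Proof.
  unfold M3, M2, M1 in HG.
  destruct HG as [-> | [-> | ->]]; [now left | right; apply Rmax_r |].
  right; eapply Rle_trans; [apply Rmax_r | apply Rmax_l].
Qed.

Lemma phi_le t : 0 <= t -> phi t <= t.
Proof.
  destruct Hnormal as [_ [H0 Hlt]]; intros [Ht | <-]; [left; auto | rewrite H0; lra].
Qed.

Lemma Fix_d_eq_0 y1 y2 : Fix d T y1 -> Fix d T y2 -> d y1 y2 = 0.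
Proof.
  unfold Fix; intros F1 F2; destruct Hsym as [Hnn Hs].
  destruct (Rle_lt_or_eq_dec _ _ (Hnn y1 y2)) as [Hpos|]; [exfalso | auto].
  assert (HGd : G y1 y2 = d y1 y2).
  { pose proof (d_le_G y1 y2) as Hlo; pose proof (G_le y1 y2) as Hup.
    unfold Hf in Hup; rewrite F1, F2, (Rmax_left 0 0), Rmax_right in Hup; lra. }
  pose proof (Hcontr y1 y2) as Hc; rewrite HGd in Hc.
  pose proof (proj2 (proj2 Hnormal) _ Hpos).
  pose proof (Htri y1 (T y1) y2); pose proof (Htri (T y1) (T y2) y2).
  rewrite (Hs (T y2) y2), F2 in *; lra.
Qed.

Lemma limit_Fix x z : d_asymptotic d T ->
  zd_conv d (fun n => Nat.iter n T x) z -> Fix d T z.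
Proof.
  intros Hasym Hz; unfold Fix; destruct Hsym as [Hnn Hs].
  destruct (Rle_lt_or_eq_dec _ _ (Hnn z (T z))) as [Hpos|]; [exfalso | auto].
  set (a := d z (T z)) in *.
  pose proof (proj2 (proj2 Hnormal) _ Hpos) as Hphia.
  set (k := Rmin (a / 4) ((a - phi a) / 2)).
  assert (Hk : k > 0) by (apply Rmin_glb_lt; lra).
  assert (Hk1 : k <= a / 4) by apply Rmin_l.
  assert (Hk2 : k <= (a - phi a) / 2) by apply Rmin_r.
  destruct (Un_cv_0_eventually_lt _ k Hz Hk) as [N1 HN1].
  destruct (Un_cv_0_eventually_lt _ k (Hasym x) Hk) as [N2 HN2].
  set (n := Nat.max N1 N2).
  pose proof (HN1 n ltac:(lia)) as Hxz; pose proof (HN1 (S n) ltac:(lia)) as HTxz.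
  pose proof (HN2 n ltac:(lia)) as Hstep; simpl in HTxz, Hstep.
  set (xn := Nat.iter n T x) in *.
  assert (Ha : a <= d z (T xn) + d (T xn) (T z)) by apply Htri.
  rewrite (Hs z (T xn)) in Ha.
  pose proof (Hcontr xn z) as Hc.
  assert (HHf : Hf d T xn z = a) by (apply Rmax_right; lra).
  destruct (G_eq_d_or_Hf_le_G xn z) as [HGd | HHfG].
  - rewrite HGd in Hc; pose proof (phi_le _ (Hnn xn z)); lra.
  - pose proof (G_le xn z) as Hup; fold a in Hup; rewrite HHf, Rmax_left in Hup by lra.
    assert (HGa : G xn z = a) by lra.
    rewrite HGa in Hc; lra.
Qed.

Lemma no_pair_near_level e r delta eta :
  (forall t, e <= t < e + delta -> phi t <= r) -> 2 * eta <= delta -> 2 * eta <= e - r ->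
  forall x y, e <= d x y < e + eta -> d x (T x) < eta -> d y (T y) < eta -> False.
Proof.
  intros Hphi Hdelta Hr x y Hxy Hx Hy; destruct Hsym as [Hnn Hs].
  pose proof (d_le_G x y) as Hlo; pose proof (G_le x y) as Hup.
  assert (HHf : Hf d T x y < eta) by now apply Rmax_lub_lt.
  assert (HG_lt : G x y < e + delta).
  { eapply Rle_lt_trans; [exact Hup|]; pose proof (Hnn x y); apply Rmax_lub_lt; lra. }
  pose proof (Hphi (G x y) ltac:(lra)) as HphiG.
  pose proof (Hcontr x y) as Hc.
  pose proof (Htri x (T x) y); pose proof (Htri (T x) (T y) y).
  rewrite (Hs (T y) y) in *; lra.
Qed.

Lemma iter_zd_cauchy x : d_asymptotic d T -> nearly_right_admissible phi ->
  zd_cauchy d (fun n => Nat.iter n T x).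
Proof.
  intros Hasym [_ [Q [_ [HQc HQ]]]] eps Heps; apply NNPP; intro Hno.
  destruct (countable_set_avoid Q (eps / 3) (2 * eps / 3) HQc ltac:(lra)) as [e [He HQe]].
  destruct (Lplus_lt_right_bound phi e (HQ e ltac:(lra) HQe))
    as [r [delta [Hr [Hdelta Hphi]]]].
  set (eta := Rmin (Rmin e delta) (e - r) / 2).
  assert (Heta : eta > 0).
  { assert (0 < Rmin (Rmin e delta) (e - r)) by (repeat apply Rmin_glb_lt; lra).
    unfold eta; lra. }
  assert (Heta_e : eta <= e / 2).
  { pose proof (Rmin_l (Rmin e delta) (e - r)); pose proof (Rmin_l e delta); unfold eta; lra. }
  assert (Heta_delta : 2 * eta <= delta).
  { pose proof (Rmin_l (Rmin e delta) (e - r)); pose proof (Rmin_r e delta); unfold eta; lra. }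
  assert (Heta_r : 2 * eta <= e - r) by (pose proof (Rmin_r (Rmin e delta) (e - r)); unfold eta; lra).
  destruct (Un_cv_0_eventually_lt _ eta (Hasym x) Heta) as [N HN].
  assert (Hfar : exists m n, (N <= m)%nat /\ (m < n)%nat /\
                   eps <= d (Nat.iter m T x) (Nat.iter n T x)).
  { apply NNPP; intro Hnf; apply Hno; exists N; intros m n Hm Hmn.
    apply Rnot_le_lt; intro; apply Hnf; eauto. }
  destruct Hfar as [m [n [Hm [Hmn Hmn_far]]]].
  destruct (nat_crossing (fun k => e <= d (Nat.iter m T x) (Nat.iter k T x)) (S m) n)
    as [k [Hk [Hbelow Habove]]].
  - pose proof (HN m ltac:(lia)); simpl in *; lra.
  - simpl; lra.
  - lia.
  - apply Rnot_le_lt in Hbelow.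
    pose proof (HN k ltac:(lia)) as Hstep; simpl in Hstep, Habove.
    pose proof (Htri (Nat.iter m T x) (Nat.iter k T x) (T (Nat.iter k T x))).
    apply (no_pair_near_level e r delta eta Hphi Heta_delta Heta_r
             (Nat.iter m T x) (T (Nat.iter k T x))).
    + lra.
    + exact (HN m ltac:(lia)).
    + exact (HN (S k) ltac:(lia)).
Qed.

End Contraction.

Theorem theorem1 (X : Type) (x0 : X) (d : X -> X -> R) (T : X -> X)
  (G : X -> X -> R) (phi : R -> R) :
  symmetric d -> triangular d -> zero_complete d ->
  d_asymptotic d T ->
  (G = M1 d T \/ G = M2 d T \/ G = M3 d T) ->
  nearly_right_admissible phi ->
  contractive d T G phi ->
  global_picard_operator d T.
Proof.
  intros Hsym Htri Hcomplete Hasym HG Hadm Hcontr.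
  pose proof (proj1 Hadm) as Hnormal.
  assert (Hpicard : picard_operator d T).
  { intro x; split.
    - apply Hcomplete; eapply iter_zd_cauchy; eauto.
    - intros z Hz; eapply limit_Fix; eauto. }
  split; [exact Hpicard | split].
  - destruct (proj1 (Hpicard x0)) as [z Hz].
    exists z; exact (proj2 (Hpicard x0) z Hz).
  - intros y1 y2; eapply Fix_d_eq_0; eauto.
Qed.
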